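(* Let $\Omega$ be a set, $q$ a set of operations on $\Omega$, and $\Pi$ a set of similarities on $\Omega$ that is a monoid with involution. Then: (1) if $\approx_\Pi\in\Pi$, then $\approx_\Pi$ equals $\sim_{\mathrm{Inv}(\Pi)}$; (2) $\sim_q$ equals $\approx_{\mathrm{Sim}(q)}$.
   Context: A similarity on $\Omega$ is a relation $\pi\subseteq\Omega\times\Omega$ such that every $a$ has some $b$ with $a\pi b$ and every $b$ has some $a$ with $a\pi b$; $\bar a\,\pi\,\bar b$ means coordinatewise relatedness; for relations $R,S\subseteq\Omega^k$, $R\,\pi\,S$ means $\bar a\pi\bar b$ implies ($\bar a\in R\iff\bar b\in S$). A monoid with involution is a set of similarities closed under composition and converses. A set of operations is a set of finitary relations and quantifiers (subsets of $\mathcal P(\Omega^{k_1})\times\cdots\times\mathcal P(\Omega^{k_l})$) on $\Omega$; $\mathscr L^-_{\infty\infty}(q)$ is the equality-free infinitary logic with predicate and Lindström quantifier symbols for members of $q$. $a\sim_q b$ iff for all formulas $\phi(x,\bar y)$ of $\mathscr L^-_{\infty\infty}(q)$ and tuples $\bar c$ from $\Omega$, $\phi(a,\bar c)\iff\phi(b,\bar c)$. $a\approx_\Pi b$ iff for every finite $k$ and $\bar c\in\Omega^k$ some $\pi\in\Pi$ has $(a,\bar c)\,\pi\,(b,\bar c)$. A relation $R$ is invariant under a similarity or equivalence relation $\rho$ if $\bar a\rho\bar b$ implies $\bar a\in R\iff\bar b\in R$; a quantifier $Q$ is $\sim$-invariant under $\pi$ if for all $\bar R,\bar S$ of its type with each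 component invariant under $\sim$ and $R_i\,\pi\,S_i$: $\bar R\in Q\iff\bar S\in Q$. $\mathrm{Inv}(\Pi)$: all relations invariant under every $\pi\in\Pi$ and all quantifiers $\approx_\Pi$-invariant under every $\pi\in\Pi$. $\mathrm{Sim}(q)$: all similarities $\pi$ under which every relation of $q$ is invariant and every quantifier of $q$ is $\sim_q$-invariant. *)

From mathcomp Require Import all_boot.
Set Implicit Arguments. Unset Strict Implicit. Unset Printing Implicit Defensive.

Definition relk (Om : Type) (k : nat) := k.-tuple Om -> Prop.

(* Operations: finitary relations, and (Lindstrom) quantifiers of type
   (ks 0, ..., ks (l-1)), i.e. subsets of P(Om^{k_0}) x ... x P(Om^{k_{l-1}}). *)
Inductive Op (Om : Type) : Type :=
| ORel (k : nat) (R : relk Om k)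
| OQuant (l : nat) (ks : 'I_l -> nat)
         (Q : (forall i : 'I_l, relk Om (ks i)) -> Prop).

Arguments ORel {Om} k R.
Arguments OQuant {Om} l ks Q.

Definition opset (Om : Type) := Op Om -> Prop.

Definition sumas (V W Om : Type) (s : V -> Om) (t : W -> Om) : V + W -> Om :=
  fun v => match v with inl x => s x | inr w => t w end.

(* Formulas of the equality-free infinitary logic L^-_{oo oo}(q), with
   free variables ranging over the type V.  Quantified blocks of variables
   (for existential quantification and for Lindstrom quantifiers) are
   represented by extending the variable type. *)
Inductive form (Om : Type) (q : opset Om) : Type -> Type :=
| FAtom (V : Type) (k : nat) (R : relk Om k) (H : q (ORel k R))
        (args : k.-tuple V) : form q V
| FNot (V : Type) (phi : form q V) : form q V
| FAnd (V : Type) (I : Type) (phis : I -> form q V) : form q V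
| FEx (V : Type) (W : Type) (phi : form q (V + W)) : form q V
| FQuant (V : Type) (l : nat) (ks : 'I_l -> nat)
         (Q : (forall i : 'I_l, relk Om (ks i)) -> Prop)
         (H : q (OQuant l ks Q))
         (phis : forall i : 'I_l, form q (V + 'I_(ks i))) : form q V.

Fixpoint sat (Om : Type) (q : opset Om) (V : Type) (phi : form q V)
  {struct phi} : (V -> Om) -> Prop :=
  match phi in form _ V' return (V' -> Om) -> Prop with
  | FAtom _ k R _ args => fun s => R (map_tuple s args)
  | FNot _ psi => fun s => ~ sat psi s
  | FAnd _ J psis => fun s => forall j : J, sat (psis j) s
  | FEx _ W psi => fun s => exists t : W -> Om, sat psi (sumas s t)
  | FQuant _ l ks Q _ psis => fun s =>
      Q (fun i (t : (ks i).-tuple Om) => sat (psis i) (sumas s (tnth t)))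
  end.

Definition simq (Om : Type) (q : opset Om) (a b : Om) : Prop :=
  forall (k : nat) (phi : form q (unit + 'I_k)) (c : k.-tuple Om),
    sat phi (sumas (fun _ => a) (tnth c)) <-> sat phi (sumas (fun _ => b) (tnth c)).

Definition similarity (Om : Type) (pi : Om -> Om -> Prop) : Prop :=
  (forall a, exists b, pi a b) /\ (forall b, exists a, pi a b).

Definition reltup (Om : Type) (pi : Om -> Om -> Prop) (k : nat)
  (a b : k.-tuple Om) : Prop := forall i : 'I_k, pi (tnth a i) (tnth b i).

Definition relsim (Om : Type) (pi : Om -> Om -> Prop) (k : nat)
  (R S : relk Om k) : Prop :=
  forall a b : k.-tuple Om, reltup pi a b -> (R a <-> S b).

Definition rel_inv (Om : Type) (rho : Om -> Om -> Prop) (k : nat)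
  (R : relk Om k) : Prop :=
  forall a b : k.-tuple Om, reltup rho a b -> (R a <-> R b).

Definition quant_inv (Om : Type) (eqv pi : Om -> Om -> Prop) (l : nat)
  (ks : 'I_l -> nat) (Q : (forall i : 'I_l, relk Om (ks i)) -> Prop) : Prop :=
  forall Rs Ss : forall i : 'I_l, relk Om (ks i),
    (forall i, rel_inv eqv (Rs i)) -> (forall i, rel_inv eqv (Ss i)) ->
    (forall i, relsim pi (Rs i) (Ss i)) -> (Q Rs <-> Q Ss).

Definition rcomp (Om : Type) (pi rho : Om -> Om -> Prop) : Om -> Om -> Prop :=
  fun a c => exists b, pi a b /\ rho b c.

Definition rconv (Om : Type) (pi : Om -> Om -> Prop) : Om -> Om -> Prop :=
  fun a b => pi b a.

Definition monoid_inv (Om : Type) (Pi : (Om -> Om -> Prop) -> Prop) : Prop :=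
  (forall pi, Pi pi -> similarity pi) /\
  (forall pi rho, Pi pi -> Pi rho -> Pi (rcomp pi rho)) /\
  (forall pi, Pi pi -> Pi (rconv pi)).

Definition approxP (Om : Type) (Pi : (Om -> Om -> Prop) -> Prop) (a b : Om) : Prop :=
  forall (k : nat) (c : k.-tuple Om),
    exists pi, Pi pi /\ reltup pi [tuple of a :: c] [tuple of b :: c].

Definition Inv (Om : Type) (Pi : (Om -> Om -> Prop) -> Prop) : opset Om :=
  fun o => match o with
  | ORel k R => forall pi, Pi pi -> rel_inv pi R
  | OQuant l ks Q => forall pi, Pi pi -> quant_inv (approxP Pi) pi Q
  end.

Definition Sim (Om : Type) (q : opset Om) (pi : Om -> Om -> Prop) : Prop :=
  similarity pi /\
  (forall k (R : relk Om k), q (ORel k R) -> rel_inv pi R) /\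
  (forall l ks (Q : (forall i : 'I_l, relk Om (ks i)) -> Prop),
      q (OQuant l ks Q) -> quant_inv (simq q) pi Q).

From mathcomp Require Import all_boot.
From Stdlib Require Import ClassicalEpsilon FunctionalExtensionality PropExtensionality.
Set Implicit Arguments. Unset Strict Implicit. Unset Printing Implicit Defensive.

(* The heart of the proof is one invariance lemma ([sat_preserved]): if every
   member of a family P of similarities preserves the relations of q, and the
   quantifiers of q are E-invariant under every member of P, for a reflexive
   E that itself belongs to P, then satisfaction of every formula of
   L^-_{oo oo}(q) is preserved along P-related valuations.  As a consequence
   ([approxP_simq]) a ~~_P b implies a ~_q b.  Both "soundness" directions of
   the theorem are instances of this: (1) with P = Pi, E = ~~_Pi and
   q = Inv(Pi); (2) with P = Sim(q), E = ~_q.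

   For the converse directions: in (2), ~_q is itself a member of Sim(q)
   ([simq_Sim]), which gives ~_q within ~~_Sim(q).  In (1), the set of tuples
   Pi-related to a fixed tuple (a, c) is a relation of Inv(Pi)
   ([Pi_orbit_Inv]); since a ~_Inv(Pi) b, the atomic formula naming it holds at
   (b, c) as it does at (a, c), which yields a similarity of Pi relating
   (a, c) and (b, c). *)

(* The tuple (x, c) read as a valuation of the variables unit + 'I_k: the
   position of index [i] in [x :: c]. *)
Definition cons_var {k} (i : 'I_k.+1) : unit + 'I_k :=
  match unlift ord0 i with None => inl tt | Some j => inr j end.

Lemma tnth_cons_var (Om : Type) k (x : Om) (c : k.-tuple Om) (i : 'I_k.+1) :
  tnth [tuple of x :: c] i = sumas (fun _ : unit => x) (tnth c) (cons_var i).
Proof.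
rewrite /cons_var; case: unliftP => [j ->|->] /=.
- by rewrite (tnth_nth x) (tnth_nth x) lift0.
- by rewrite (tnth_nth x).
Qed.

Lemma reltup_cons (Om : Type) (pi : Om -> Om -> Prop) k (a b : Om)
  (c : k.-tuple Om) :
  reltup pi [tuple of a :: c] [tuple of b :: c] <->
  forall v, pi (sumas (fun _ : unit => a) (tnth c) v)
               (sumas (fun _ : unit => b) (tnth c) v).
Proof.
split.
- move=> H [[]|j].
  + by have := H ord0; rewrite !tnth_cons_var /cons_var unlift_none.
  + by have := H (lift ord0 j); rewrite !tnth_cons_var /cons_var liftK.
- by move=> H i; rewrite !tnth_cons_var; apply: H.
Qed.

Definition cons_args k : (k.+1).-tuple (unit + 'I_k) :=
  [tuple cons_var i | i < k.+1].

Lemma map_cons_args (Om : Type) k (x : Om) (c : k.-tuple Om) :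
  map_tuple (sumas (fun _ : unit => x) (tnth c)) (cons_args k) =
  [tuple of x :: c].
Proof.
by apply: eq_from_tnth => i; rewrite tnth_map tnth_mktuple tnth_cons_var.
Qed.

Lemma simq_rel_cons (Om : Type) (q : opset Om) k (R : relk Om k.+1)
  (HR : q (ORel k.+1 R)) (a b : Om) (c : k.-tuple Om) :
  simq q a b -> (R [tuple of a :: c] <-> R [tuple of b :: c]).
Proof.
by move=> Hab; have := Hab k (FAtom HR (cons_args k)) c; rewrite /= !map_cons_args.
Qed.

Lemma total_lift (A B W : Type) (r : A -> B -> Prop) :
  (forall x, exists y, r x y) ->
  forall t : W -> A, exists u : W -> B, forall w, r (t w) (u w).
Proof.
move=> total t; have [f Hf] := choice r total.
by exists (fun w => f (t w)) => w; apply: Hf.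
Qed.

Section SatisfactionInvariance.

Variables (Om : Type) (q : opset Om) (P : (Om -> Om -> Prop) -> Prop)
  (E : Om -> Om -> Prop).

Hypothesis P_similarity : forall pi, P pi -> similarity pi.
Hypothesis P_rel : forall pi, P pi ->
  forall k (R : relk Om k), q (ORel k R) -> rel_inv pi R.
Hypothesis P_quant : forall pi, P pi ->
  forall l ks Q, q (OQuant l ks Q) -> quant_inv E pi Q.
Hypothesis P_E : P E.
Hypothesis E_refl : forall x, E x x.

(* Satisfaction is preserved along valuations related by a member of P.
   The quantifier case uses that the relations defined by the subformulas
   are E-invariant, which is the statement itself for the member E. *)
Lemma sat_preserved V (phi : form q V) pi : P pi ->
  forall s t : V -> Om, (forall v, pi (s v) (t v)) -> (sat phi s <-> sat phi t).
Proof.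
elim: phi pi => [V' k R HR args|V' psi IH|V' I psis IH|V' W psi IH|
                 V' l ks Q HQ psis IH] pi Ppi s t Hst /=.
- by apply: (P_rel Ppi HR) => i; rewrite !tnth_map; apply: Hst.
- by have := IH pi Ppi s t Hst; tauto.
- by split=> H j; have := IH j pi Ppi s t Hst; have := H j; tauto.
- have [pi_left pi_right] := P_similarity Ppi.
  split=> -[w Hw].
  + have [w' Hww'] := total_lift pi_left w.
    by exists w'; apply/(IH pi Ppi (sumas s w)) => // -[v|x] /=.
  + have [w' Hw'w] := total_lift (r := fun y x => pi x y) pi_right w.
    by exists w'; apply/(IH pi Ppi _ (sumas t w)) => // -[v|x] /=.
- apply: (P_quant Ppi HQ) => i a b Hab.
  + by apply: (IH i E P_E) => -[v|j] /=; [apply: E_refl | apply: Hab].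
  + by apply: (IH i E P_E) => -[v|j] /=; [apply: E_refl | apply: Hab].
  + by apply: (IH i pi Ppi) => -[v|j] /=; [apply: Hst | apply: Hab].
Qed.

Lemma approxP_simq (a b : Om) : approxP P a b -> simq q a b.
Proof.
move=> Hab k phi c; have [pi [Ppi Hpi]] := Hab k c.
by apply: (sat_preserved phi Ppi); apply/reltup_cons.
Qed.

End SatisfactionInvariance.

Lemma simq_sym (Om : Type) (q : opset Om) x y : simq q x y -> simq q y x.
Proof. by move=> H k phi c; have := H k phi c; tauto. Qed.

Definition tupd (Om : Type) k (t : k.-tuple Om) (i : 'I_k) (x : Om) :
  k.-tuple Om := [tuple (if m == i then x else tnth t m) | m < k].

(* For a symmetric rho, a relation closed under changing one coordinate along
   rho is rho-invariant: change the coordinates one at a time.  [mix j] takes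
   its first j coordinates from b and the others from a. *)
Lemma rel_inv_coordinatewise (Om : Type) (rho : Om -> Om -> Prop) k
  (R : relk Om k) :
  (forall x y, rho x y -> rho y x) ->
  (forall t i x y, rho x y -> R (tupd t i x) -> R (tupd t i y)) ->
  rel_inv rho R.
Proof.
move=> rho_sym R_step a b Hab.
pose mix j := [tuple (if (m < j)%N then tnth b m else tnth a m) | m < k].
suff mixP j : (j <= k)%N -> (R a <-> R (mix j)).
  have -> : b = mix k by apply: eq_from_tnth => m; rewrite tnth_mktuple ltn_ord.
  exact: mixP.
elim: j => [_|j IHj lt_jk].
- have -> : mix 0 = a by apply: eq_from_tnth => m; rewrite tnth_mktuple ltn0.
  by [].
- pose o := Ordinal lt_jk.
  have mix_a : tupd (mix j) o (tnth a o) = mix j.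
    apply: eq_from_tnth => m; rewrite !tnth_mktuple.
    by case: (eqVneq m o) => [->|//]; rewrite ?tnth_mktuple ?ltnn.
  have mix_b : tupd (mix j) o (tnth b o) = mix j.+1.
    apply: eq_from_tnth => m; rewrite !tnth_mktuple.
    case: (eqVneq m o) => [->|ne]; first by rewrite ltnSn.
    have nej : (m : nat) != j by apply: contra ne => /eqP e; apply/eqP/val_inj.
    by rewrite ?tnth_mktuple (ltnS m j) [(m <= j)%N]leq_eqVlt (negbTE nej).
  have := IHj (ltnW lt_jk).
  have := R_step (mix j) o _ _ (Hab o); rewrite mix_a mix_b.
  have := R_step (mix j) o _ _ (rho_sym _ _ (Hab o)); rewrite mix_a mix_b.
  tauto.
Qed.

(* Every relation of q is ~_q-invariant: a single coordinate change is
   witnessed by an atomic formula with one free variable for that coordinate. *)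
Lemma simq_rel (Om : Type) (q : opset Om) k (R : relk Om k) :
  q (ORel k R) -> rel_inv (simq q) R.
Proof.
move=> HR; apply: rel_inv_coordinatewise => [x y|t i x y Hxy]; first exact: simq_sym.
pose args : k.-tuple (unit + 'I_k) :=
  [tuple (if m == i then inl tt else inr m) | m < k].
have args_val z : map_tuple (sumas (fun _ : unit => z) (tnth t)) args = tupd t i z.
  by apply: eq_from_tnth => m; rewrite tnth_map !tnth_mktuple; case: (m == i).
by have := Hxy k (FAtom HR args) t; rewrite /= !args_val; tauto.
Qed.

(* ~_q is a similarity respecting q; its quantifier condition is trivial
   because ~_q is reflexive, so ~_q-related relations are equal. *)
Lemma simq_Sim (Om : Type) (q : opset Om) : Sim q (simq q).
Proof.
split; first by split=> x; exists x.
split; first by move=> k R HR; apply: simq_rel.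
move=> l ks Q _ Rs Ss _ _ Hrs.
suff -> : Rs = Ss by [].
apply: functional_extensionality_dep => i; apply: functional_extensionality => a.
by apply: propositional_extensionality; apply: Hrs.
Qed.

(* A monoid with involution containing some pi contains the reflexive
   similarity pi ; pi^-1 (reflexive because pi is total). *)
Lemma monoid_inv_refl (Om : Type) (Pi : (Om -> Om -> Prop) -> Prop) pi :
  monoid_inv Pi -> Pi pi -> exists rho, Pi rho /\ forall x, rho x x.
Proof.
move=> [Hsim [Hcomp Hconv]] Ppi.
exists (rcomp pi (rconv pi)); split; first by apply: Hcomp => //; apply: Hconv.
by move=> x; have [y Hy] := (Hsim _ Ppi).1 x; exists y.
Qed.

Definition Pi_orbit (Om : Type) (Pi : (Om -> Om -> Prop) -> Prop) k
  (t0 : k.-tuple Om) : relk Om k :=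
  fun t => exists pi, Pi pi /\ reltup pi t t0.

(* Closure under composition and converse makes every Pi-orbit invariant under
   Pi, i.e. a relation of Inv(Pi). *)
Lemma Pi_orbit_Inv (Om : Type) (Pi : (Om -> Om -> Prop) -> Prop) k
  (t0 : k.-tuple Om) :
  monoid_inv Pi -> Inv Pi (ORel k (Pi_orbit Pi t0)).
Proof.
move=> [_ [Hcomp Hconv]] r Pr t t' Htt'; split=> -[pi [Ppi Hpi]].
- exists (rcomp (rconv r) pi); split; first by apply: Hcomp => //; apply: Hconv.
  by move=> i; exists (tnth t i); split; [apply: Htt' | apply: Hpi].
- exists (rcomp r pi); split; first exact: Hcomp.
  by move=> i; exists (tnth t' i); split; [apply: Htt' | apply: Hpi].
Qed.

Theorem proposition15 (Om : Type) (q : opset Om)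
  (Pi : (Om -> Om -> Prop) -> Prop) (HPi : monoid_inv Pi) :
  (Pi (approxP Pi) -> forall a b : Om, approxP Pi a b <-> simq (Inv Pi) a b) /\
  (forall a b : Om, simq q a b <-> approxP (Sim q) a b).
Proof.
have [Hsim [_ Hconv]] := HPi.
split=> [PiA a b|a b].
- have [rho [Prho rho_refl]] := monoid_inv_refl HPi PiA.
  have approx_refl x : approxP Pi x x.
    by move=> k c; exists rho; split=> // i; apply: rho_refl.
  split.
  + by apply: (approxP_simq Hsim _ _ PiA) => [pi Ppi k R HR|pi Ppi l ks Q HQ|];
      [apply: HR | apply: HQ | ].
  + move=> Hab k c.
    have [pi [Ppi Hpi]] : Pi_orbit Pi [tuple of a :: c] [tuple of b :: c].
      by apply/(simq_rel_cons (Pi_orbit_Inv _ HPi) _ Hab); apply: approx_refl.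
    by exists (rconv pi); split; [apply: Hconv | move=> i; apply: Hpi].
- split.
  + move=> Hab k c; exists (simq q); split; first exact: simq_Sim.
    by apply/reltup_cons => -[[]|j].
  + apply: (approxP_simq (E := simq q)) => [pi []|pi [_ []]|pi [_ [_ HQ]]||] //.
    exact: simq_Sim.
Qed.
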